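(* Let $p\geq 1$ be an integer, $H$ a connected graph with at least $2p$ vertices, and $T$ a complete rooted ternary tree with at least $p$ vertices. Let $V\subseteq V(T(H))$ with $OC(T,V)=V(T)$ and let $SV$ be an ordering of $V$. Then $T(H)$ has a witnessing matching $M$ for $SV$ of size at least $p\,(tr(|V(T)|)-tr(p))$. Moreover, $M$ is supported by a partition of $SV$ into a prefix $SV_1$ and a suffix $SV_2$ such that $|V(T(H))|-|SV_i|\geq p^2$ for each $i\in\{1,2\}$.
   Context: Complete rooted ternary tree of height $h$: rooted tree, every root-leaf path has exactly $h$ edges, every non-leaf vertex has exactly 3 children. For real $x\geq1$, $tr(x)$ is the largest integer $h\geq0$ such that a complete rooted ternary tree of height $h$ has at most $x$ vertices. Graph $T(H)$: for $V(H)=\{1,\dots,m\}$, vertices $v^i$ ($v\in V(T)$, $1\le i\le m$); for each $v$, $v^1,\dots,v^m$ span a copy $H^v$ of $H$; and $u^iv^i$ is an edge for each $i$ whenever $uv\in E(T)$. $OC(T,V)=\{u\in V(T): V(H^u)\cap V\neq\emptyset\}$. For a graph $G$, $V\subseteq V(G)$ and an ordering $SV$ of $V$: a partition of $SV$ into a prefix $SV_1$ and a suffix $SV_2$ supports an edge $\{u,v\}$ if one endpoint is in $SV_1$ and the other in $SV_2$, or one endpoint is in $V$ and the other in $V(G)\setminus V$; a matching is supported by the partition if all its edges are, and it is witnessing for $SV$ if it is supported by some such prefix/suffix partition. *)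

From mathcomp Require Import all_boot.
Set Implicit Arguments. Unset Strict Implicit. Unset Printing Implicit Defensive.

Definition simple_graph (V : finType) (e : rel V) : Prop :=
  (forall u v, e u v = e v u) /\ (forall v, ~~ e v v).

Definition connected_graph (V : finType) (e : rel V) : Prop :=
  simple_graph e /\ (forall u v, connect e u v).

(* Rooted tree given by root r and parent map par (par r = r); the edges are
   exactly the pairs {v, par v} for v <> r, and every vertex reaches r. *)
Definition is_rooted_tree (V : finType) (e : rel V) (r : V) (par : V -> V) : Prop :=
  par r = r /\ (forall v, exists k, iter k par v = r) /\
  (forall u v, e u v = ((u != r) && (par u == v)) || ((v != r) && (par v == u))).

Definition children (V : finType) (r : V) (par : V -> V) (v : V) : {set V} :=
  [set u | (u != r) && (par u == v)].

Definition is_leaf (V : finType) (r : V) (par : V -> V) (v : V) : bool :=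
  children r par v == set0.

Definition depth_is (V : finType) (r : V) (par : V -> V) (v : V) (k : nat) : Prop :=
  iter k par v = r /\ (forall j, j < k -> iter j par v != r).

Definition complete_ternary_tree (V : finType) (e : rel V) (h : nat) : Prop :=
  exists (r : V) (par : V -> V),
    is_rooted_tree e r par /\
    (forall v, is_leaf r par v -> depth_is r par v h) /\
    (forall v, ~~ is_leaf r par v -> #|children r par v| = 3).

(* number of vertices of a complete rooted ternary tree of height h *)
Definition ctt_size (h : nat) : nat := (3 ^ h.+1).-1 %/ 2.

(* tr(x): largest h >= 0 with ctt_size h <= x  (for x >= 1; ctt_size h > x when h >= x) *)
Definition tr (x : nat) : nat := \max_(h < x.+1 | ctt_size h <= x) h.

(* The graph T(H), vertex (v,i) stands for v^i *)
Definition prodTH (T : finType) (eT : rel T) (m : nat) (eH : rel 'I_m) :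
  rel (T * 'I_m) :=
  fun x y => ((x.1 == y.1) && eH x.2 y.2) || ((x.2 == y.2) && eT x.1 y.1).

Definition OC (T : finType) (m : nat) (V : {set T * 'I_m}) : {set T} :=
  [set u | [exists i : 'I_m, (u, i) \in V]].

Definition ordering_of (X : finType) (V : {set X}) (SV : seq X) : Prop :=
  uniq SV /\ (forall x, (x \in SV) = (x \in V)).

Definition is_matching (X : finType) (e : rel X) (M : {set {set X}}) : Prop :=
  (forall A, A \in M -> exists u v, [/\ u != v, e u v & A = [set u; v]]) /\
  (forall A B, A \in M -> B \in M -> A != B -> [disjoint A & B]).

Definition supports_edge (X : finType) (V : {set X}) (SV : seq X) (k : nat)
  (u v : X) : bool :=
  [|| (u \in take k SV) && (v \in drop k SV),
      (v \in take k SV) && (u \in drop k SV),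
      (u \in V) && (v \notin V) | (v \in V) && (u \notin V)].

Definition supports_matching (X : finType) (V : {set X}) (SV : seq X) (k : nat)
  (M : {set {set X}}) : Prop :=
  forall u v, [set u; v] \in M -> u != v -> supports_edge V SV k u v.

From mathcomp Require Import all_boot zify.
Set Implicit Arguments. Unset Strict Implicit. Unset Printing Implicit Defensive.

(* A cut k of SV splits T(H) into its prefix, its suffix and the vertices outside V, and
   every edge between two different parts is supported. Call k balanced for a set P of tree
   vertices if at least p^2 vertices of the block P x V(H) avoid the prefix and at least p^2
   avoid the suffix. If P is closed under parents below its top and |P| >= p, a balanced cut
   yields p disjoint supported edges inside the block: otherwise fewer than p rows and fewer
   than p columns meet two parts (H is connected, and so is P through parents), so some
   monochromatic row, which meets V, and some monochromatic column share their part, and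
   fewer than p^2 vertices of the block lie outside it, against balance.
   Going up the tree, keep the matching of the child whose balanced cut is the median; the
   rest of the subtree is balanced for that cut and contributes p new edges. This gains p
   edges at each of the h - tr(p) levels whose subtrees still have p vertices. *)

Lemma ctt_sizeS d : ctt_size d.+1 = 3 * ctt_size d + 1.
Proof.
rewrite /ctt_size expnS.
have := odd_double_half (3 ^ d.+1).
rewrite oddX orbT /= => <-.
rewrite -!muln2; lia.
Qed.

Lemma ltn_ctt_size d : d < ctt_size d.
Proof. by elim: d => // d IH; rewrite ctt_sizeS; lia. Qed.

Lemma leq_ctt_size : {mono ctt_size : i j / i <= j}.
Proof. by apply: leq_mono; apply: (homo_ltn ltn_trans) => i; rewrite ctt_sizeS; lia. Qed.

Lemma leq_tr x d : ctt_size d <= x -> d <= tr x.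
Proof.
move=> le_dx; have lt_dx : d < x.+1 by have := ltn_ctt_size d; lia.
exact: (@leq_bigmax_cond _ (fun i : 'I_x.+1 => ctt_size i <= x) val (Ordinal lt_dx)).
Qed.

Lemma tr_ctt_size h : tr (ctt_size h) <= h.
Proof. by apply/bigmax_leqP => i; rewrite leq_ctt_size. Qed.

Lemma set3_of_cards3 (X : finType) (A : {set X}) : #|A| = 3 ->
  exists a b c, uniq [:: a; b; c] /\ A = [set a; b; c].
Proof.
move=> cardA; have /card_gt0P [a aA] : 0 < #|A| by rewrite cardA.
have /cards2P [b [c [neq_bc Aa]]] : #|A :\ a| == 2.
  by move: cardA; rewrite (cardsD1 a) aA add1n => -[->].
have : b \in A :\ a /\ c \in A :\ a by rewrite Aa !inE !eqxx orbT.
rewrite !inE => -[/andP [ba _] /andP [ca _]].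
exists a, b, c; split; first by rewrite /= !inE negb_or eq_sym ba eq_sym ca neq_bc.
by rewrite -(setD1K aA) Aa setUA.
Qed.

Lemma median_of_three (A : eqType) (K : A -> nat) (a b c : A) : exists x y z,
  perm_eq [:: x; y; z] [:: a; b; c] /\ K x <= K y <= K z.
Proof.
set leK := fun u w => K u <= K w.
have := perm_sort leK [:: a; b; c]; have := size_sort leK [:: a; b; c].
have := sort_sorted (fun u w => leq_total (K u) (K w)) [:: a; b; c].
case: (sort leK _) => [|x [|y [|z []]]] //= /and3P [le_xy le_yz _] _ perm_xyz.
by exists x, y, z; rewrite perm_xyz le_xy le_yz.
Qed.

Lemma exists_seq_preimage (K E : eqType) (key : E -> K) (Q : pred E) (l : seq K) :
  (forall u, u \in l -> exists2 e, Q e & key e = u) ->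
  exists2 s : seq E, map key s = l & all Q s.
Proof.
elim: l => [|u l IHl] preim; first by exists [::].
have [e Qe <-] := preim u (mem_head u l).
have [|s <- Qs] := IHl; first by move=> w wl; apply: preim; rewrite inE wl orbT.
by exists (e :: s); rewrite //= Qe.
Qed.

Lemma connect_change (Y : finType) (C : eqType) (e : rel Y) (g : Y -> C) x y :
  connect e x y -> g x != g y -> exists a b, e a b && (g a != g b).
Proof.
move=> /connectP [q xq ->]; elim: q x xq => [|z q IHq] x /=; first by rewrite eqxx.
case/andP => exz zq; have [gxz|] := eqVneq (g x) (g z); last by exists x, z; rewrite exz.
by rewrite gxz; exact: IHq.
Qed.

Section RootedTree.
Variables (T : finType) (r : T) (par : T -> T).
Hypothesis par_r : par r = r.
Hypothesis reach_r : forall v, exists k, iter k par v = r.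

Local Notation children := (children r par).

Definition subtree v := [set u | fconnect par u v].

Lemma subtreeP u v : reflect (exists n, iter n par u = v) (u \in subtree v).
Proof.
rewrite inE; apply: (iffP idP) => [/iter_findex|[n <-]]; last exact: fconnect_iter.
by exists (findex par u v).
Qed.

Lemma subtree_refl v : v \in subtree v.
Proof. by rewrite inE connect0. Qed.

Lemma subtree_trans u v w : u \in subtree v -> v \in subtree w -> u \in subtree w.
Proof. rewrite !inE; exact: connect_trans. Qed.

Lemma subtree_par c : c \in subtree (par c).
Proof. by rewrite inE fconnect1. Qed.

Lemma subtree_root : subtree r = [set: T].
Proof. by apply/setP => u; rewrite in_setT; apply/subtreeP/reach_r. Qed.

Lemma childP v c : reflect (c != r /\ par c = v) (c \in children v).
Proof. by rewrite inE; apply: (iffP andP) => -[-> /eqP]. Qed.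

(* Every parent chain ends at the fixed point r, so par has no other cycle. *)
Lemma iter_par_cycle n u : iter n.+1 par u = u -> u = r.
Proof.
move=> cyc; have [k uk] := reach_r u.
have periodic q : iter (q * n.+1) par u = u.
  by elim: q => // q IHq; rewrite mulSn iterD IHq cyc.
by rewrite -(periodic k) -(subnK (leq_pmulr k (ltn0Sn n))) iterD uk iter_fix.
Qed.

Lemma par_notin_subtree c : c != r -> par c \notin subtree c.
Proof.
move=> cr; apply: contra cr => /subtreeP [n cyc].
by apply/eqP/(@iter_par_cycle n); rewrite iterSr.
Qed.

Lemma subtree_child_parent v c : c \in children v -> v \notin subtree c.
Proof. by case/childP => cr <-; exact: par_notin_subtree. Qed.

Lemma subtree_child v c : c \in children v -> subtree c \subset subtree v.
Proof.
move=> /childP [_ <-]; apply/subsetP => u uc.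
exact: subtree_trans uc (subtree_par c).
Qed.

Lemma subtree_child_proper v c : c \in children v -> subtree c \proper subtree v.
Proof.
move=> cv; rewrite properE subtree_child //=; apply/subsetPn; exists v.
  exact: subtree_refl.
exact: subtree_child_parent.
Qed.

Lemma subtree_total u a b : u \in subtree a -> u \in subtree b ->
  (a \in subtree b) || (b \in subtree a).
Proof.
move=> /subtreeP [n1 <-] /subtreeP [n2 <-].
have [le12|/ltnW le21] := leqP n1 n2; apply/orP; [left|right]; apply/subtreeP.
  by exists (n2 - n1); rewrite -iterD subnK.
by exists (n1 - n2); rewrite -iterD subnK.
Qed.

Lemma disjoint_subtree_children v a b : a \in children v -> b \in children v ->
  a != b -> [disjoint subtree a & subtree b].
Proof.
move=> av bv ab; apply/pred0P => u /=; apply/negP => /andP [ua ub].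
have below x y : x \in children v -> y \in children v -> x != y -> x \notin subtree y.
  move=> /childP [xr px] /childP [yr py] xy; apply: contra (par_notin_subtree yr).
  by rewrite !inE fconnect_eqVf (negbTE xy) px -py.
by case/orP: (subtree_total ua ub); apply/negP; apply: below; rewrite // eq_sym.
Qed.

Lemma subtree_descend v u : u \in subtree v -> u != v ->
  exists2 c, c \in children v & u \in subtree c.
Proof.
move=> /subtreeP [n]; elim: n u => [u <-|n IHn u]; first by rewrite eqxx.
rewrite iterSr => uv neq; have [pu_v|pu_nv] := eqVneq (par u) v.
  exists u; last exact: subtree_refl.
  by apply/childP; split=> //; apply: contra neq => /eqP ur; rewrite -pu_v ur par_r.
have [c cv puc] := IHn _ uv pu_nv.
by exists c => //; apply: subtree_trans (subtree_par u) puc.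
Qed.

Lemma subtree_ind (P : T -> Prop) :
  (forall v, (forall c, c \in children v -> P c) -> P v) -> forall v, P v.
Proof.
move=> IH v; move: {2}#|subtree v| (leqnn #|subtree v|) => n.
elim: n v => [|n IHn] v size_v; apply: IH => c /subtree_child_proper/proper_card lt_cv.
  by move: (leq_trans lt_cv size_v).
by apply: IHn; rewrite -ltnS (leq_trans lt_cv size_v).
Qed.

Lemma depth_is_uniq v d1 d2 : depth_is r par v d1 -> depth_is r par v d2 -> d1 = d2.
Proof.
move=> [v_d1 min_d1] [v_d2 min_d2].
by case: (ltngtP d1 d2) => // [/min_d2|/min_d1]; rewrite ?v_d1 ?v_d2 eqxx.
Qed.

Lemma depth_is_child v c d : c \in children v -> depth_is r par v d -> depth_is r par c d.+1.
Proof.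
move=> /childP [cr <-] [pc_d min_d]; split; first by rewrite iterSr.
by case=> // j; rewrite ltnS iterSr; exact: min_d.
Qed.

Definition parent_closed (P : {set T}) rho :=
  rho \in P /\ {in P, forall u, u != rho -> (u != r) && (par u \in P)}.

Lemma parent_closed_subtree v : parent_closed (subtree v) v.
Proof.
split=> [|u]; first exact: subtree_refl.
rewrite inE fconnect_eqVf => /orP [/eqP->|pu_v]; first by rewrite eqxx.
move=> neq; rewrite inE pu_v andbT; apply: contra neq => /eqP ur.
by move: pu_v; rewrite ur par_r => /iter_findex; rewrite iter_fix // => ->.
Qed.

Lemma parent_closed_subtreeD v c : c \in children v ->
  parent_closed (subtree v :\: subtree c) v.
Proof.
move=> cv; have [cr pc] := childP _ _ cv; have [_ closed_v] := parent_closed_subtree v.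
split=> [|u]; first by rewrite in_setD -{1}pc (par_notin_subtree cr) subtree_refl.
rewrite !in_setD => /andP [uc uv] neq; have /andP [-> puv] := closed_v u uv neq.
rewrite puv andbT; apply: contra uc => puc.
exact: subtree_trans (subtree_par u) puc.
Qed.

Lemma parent_closed_change (C : eqType) (g : T -> C) P rho u :
  parent_closed P rho -> u \in P -> g u != g rho ->
  exists x, [&& x \in P, x != rho & g x != g (par x)].
Proof.
move=> [_ closed]; have [n] := reach_r u; elim: n u => [|n IHn] u.
  move=> /= -> rP; have [<-|r_rho] := eqVneq r rho; first by rewrite eqxx.
  by have := closed r rP r_rho; rewrite eqxx.
rewrite iterSr => pu_r uP neq; have [u_rho|u_rho] := eqVneq u rho.
  by rewrite u_rho eqxx in neq.
have /andP [_ puP] := closed u uP u_rho.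
have [eq_g|] := eqVneq (g u) (g (par u)); last by exists u; rewrite uP u_rho.
by apply: IHn pu_r puP _; rewrite -eq_g.
Qed.

Section CompleteTernary.
Variable h : nat.
Hypothesis leaf_depth : forall v, is_leaf r par v -> depth_is r par v h.
Hypothesis nonleaf_children : forall v, ~~ is_leaf r par v -> #|children v| = 3.

Lemma subtree_leaf v : is_leaf r par v -> subtree v = [set v].
Proof.
move=> /eqP leaf_v; apply/setP => u; rewrite inE.
have [->|neq] := eqVneq u v; first exact: subtree_refl.
by apply/negP => /subtree_descend/(_ neq) [c]; rewrite leaf_v inE.
Qed.

Lemma subtree_nonleaf v : ~~ is_leaf r par v -> exists a b c,
  [/\ uniq [:: a; b; c], children v = [set a; b; c] &
      subtree v = v |: (subtree a :|: subtree b :|: subtree c)].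
Proof.
move=> /nonleaf_children/set3_of_cards3 [a [b [c [abc Cv]]]]; exists a, b, c; split=> //.
apply/setP => u; rewrite in_setU1 !in_setU; have [->|neq] /= := eqVneq u v.
  exact: subtree_refl.
apply/idP/idP => [/subtree_descend/(_ neq) [x]|].
  by rewrite Cv !inE => /orP [/orP [] |] /eqP -> ->; rewrite ?orbT.
move=> /orP [/orP [] |] ux; apply: subsetP ux; apply: subtree_child.
all: by rewrite Cv !inE eqxx ?orbT.
Qed.

Lemma card_subtree_depth v d : depth_is r par v d ->
  d <= h /\ #|subtree v| = ctt_size (h - d).
Proof.
elim/subtree_ind: v d => v IH d v_d.
have [leaf_v|nonleaf_v] := boolP (is_leaf r par v).
  by rewrite (depth_is_uniq v_d (leaf_depth leaf_v)) subnn subtree_leaf // cards1.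
have [a [b [c [abc Cv ->]]]] := subtree_nonleaf nonleaf_v.
have [av bv cv] : [/\ a \in children v, b \in children v & c \in children v].
  by rewrite Cv !inE !eqxx ?orbT.
have size_child x : x \in children v -> d < h /\ #|subtree x| = ctt_size (h - d.+1).
  by move=> xv; exact: IH xv _ (depth_is_child xv v_d).
have disj x y : x \in children v -> y \in children v -> x != y ->
    subtree x :&: subtree y = set0.
  by move=> xv yv xy; apply/eqP; rewrite setI_eq0 (disjoint_subtree_children xv yv xy).
have cardU (A B : {set T}) : A :&: B = set0 -> #|A :|: B| = #|A| + #|B|.
  by move=> AB; rewrite cardsU AB cards0 subn0.
move: abc; rewrite /= !inE negb_or => /and3P [/andP [ab ac] bc _].
rewrite cardsU1 !in_setU !(negbTE (subtree_child_parent _)) //.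
rewrite cardU ?setIUl ?disj // ?setU0 // cardU ?disj //.
have [dh ->] := size_child a av; have [_ ->] := size_child b bv; have [_ ->] := size_child c cv.
split; first exact: ltnW.
by rewrite -(subnSK dh) ctt_sizeS /=; lia.
Qed.

Section Grid.
Variables (m : nat) (eH : rel 'I_m) (eT : rel T).
Hypothesis eT_par : forall u, u != r -> eT u (par u).
Hypothesis eH_connected : forall i j, connect eH i j.

Local Notation X := (T * 'I_m)%type.

Definition ends (s : seq (X * X)) : seq X := flatten [seq [:: e.1; e.2] | e <- s].

Lemma mem_endsP x s :
  reflect (exists2 e, e \in s & (x == e.1) || (x == e.2)) (x \in ends s).
Proof. by apply: (iffP flatten_mapP) => -[e es xe]; exists e; rewrite // !inE in xe *. Qed.

Lemma ends_cat s1 s2 : ends (s1 ++ s2) = ends s1 ++ ends s2.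
Proof. by rewrite /ends map_cat flatten_cat. Qed.

Definition bichromatic_matching (C : eqType) (f : X -> C) (P : {set T})
    (s : seq (X * X)) :=
  [&& all (fun e => prodTH eT eH e.1 e.2 && (f e.1 != f e.2)) s,
      uniq (ends s) & all (fun x => x.1 \in P) (ends s)].

Lemma bichromatic_matching_cat (C : eqType) (f : X -> C) (P Q : {set T}) s1 s2 :
  [disjoint P & Q] -> bichromatic_matching f P s1 -> bichromatic_matching f Q s2 ->
  bichromatic_matching f (P :|: Q) (s1 ++ s2).
Proof.
move=> PQ /and3P [edges1 uniq1 in1] /and3P [edges2 uniq2 in2].
rewrite /bichromatic_matching all_cat edges1 edges2 ends_cat cat_uniq uniq1 uniq2 all_cat /=.
apply/and3P; split.
- rewrite andbT; apply/hasPn => x /(allP in2) xQ; apply: contraL xQ => /(allP in1) xP.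
  by rewrite (disjointFr PQ xP).
- by apply/allP => x /(allP in1) xP; rewrite inE xP.
- by apply/allP => x /(allP in2) xQ; rewrite inE xQ orbT.
Qed.

Lemma keyed_bichromatic_matching (K C : eqType) (key : X -> K) (f : X -> C)
    (P : {set T}) s :
  all (fun e => [&& prodTH eT eH e.1 e.2, f e.1 != f e.2, key e.1 == key e.2,
                    e.1.1 \in P & e.2.1 \in P]) s ->
  uniq [seq key e.1 | e <- s] -> bichromatic_matching f P s.
Proof.
elim: s => [|e s IHs] //= /andP [/and5P [edge_e bic_e key_e e1P e2P] good_s].
move=> /andP [new_e uniq_s].
have /and3P [edges_s uniq_ends in_s] := IHs good_s uniq_s.
rewrite /bichromatic_matching /= edge_e bic_e edges_s e1P e2P in_s uniq_ends !andbT /=.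
have fresh x : key x = key e.1 -> x \notin ends s.
  move=> kx; apply: contra new_e => /mem_endsP [e' e's /orP [] /eqP xe'];
    apply/mapP; exists e' => //.
    by rewrite -kx xe'.
  by have /and5P [_ _ /eqP -> _ _] := allP good_s e' e's; rewrite -kx xe'.
rewrite -/(ends s) in_cons negb_or !fresh ?(eqP key_e) // !andbT.
by apply: contra bic_e => /eqP ->.
Qed.

Definition split_rows (C : eqType) (f : X -> C) (P : {set T}) :=
  [set u in P | [exists i, exists j, f (u, i) != f (u, j)]].

Definition split_cols (C : eqType) (f : X -> C) (P : {set T}) :=
  [set i : 'I_m | [exists u in P, exists w in P, f (u, i) != f (w, i)]].

Lemma row_matching (C : eqType) (f : X -> C) P :
  exists2 s, bichromatic_matching f P s & size s = #|split_rows f P|.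
Proof.
have [|s keys good] := @exists_seq_preimage _ _ (fun e : X * X => e.1.1)
  (fun e => [&& prodTH eT eH e.1 e.2, f e.1 != f e.2, e.1.1 == e.2.1, e.1.1 \in P & e.2.1 \in P])
  (enum (split_rows f P)).
  move=> u; rewrite mem_enum inE => /andP [uP /existsP [i /existsP [j fij]]].
  have [a [b /andP [ab fab]]] := connect_change (g := fun k => f (u, k)) (eH_connected i j) fij.
  by exists ((u, a), (u, b)); rewrite //= /prodTH /= eqxx ab fab uP.
exists s; first by apply: keyed_bichromatic_matching good _; rewrite keys enum_uniq.
by rewrite -(size_map (fun e : X * X => e.1.1)) keys -cardE.
Qed.

Lemma col_matching (C : eqType) (f : X -> C) P rho : parent_closed P rho ->
  exists2 s, bichromatic_matching f P s & size s = #|split_cols f P|.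
Proof.
move=> closed; have [_ closedP] := closed.
have [|s keys good] := @exists_seq_preimage _ _ (fun e : X * X => e.1.2)
  (fun e => [&& prodTH eT eH e.1 e.2, f e.1 != f e.2, e.1.2 == e.2.2, e.1.1 \in P & e.2.1 \in P])
  (enum (split_cols f P)).
  move=> i; rewrite mem_enum inE => /exists_inP [u uP /exists_inP [w wP fuw]].
  have [x /and3P [xP x_rho fx]] : exists x, [&& x \in P, x != rho & f (x, i) != f (par x, i)].
    have change := parent_closed_change (g := fun y => f (y, i)) closed.
    have [fu|fu] := eqVneq (f (u, i)) (f (rho, i)); last exact: (change u uP fu).
    by apply: (change w wP); rewrite -fu eq_sym.
  have /andP [xr pxP] := closedP x xP x_rho.
  by exists ((x, i), (par x, i)); rewrite //= /prodTH /= eqxx eT_par // fx xP pxP orbT.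
exists s; first by apply: keyed_bichromatic_matching good _; rewrite keys enum_uniq.
by rewrite -(size_map (fun e : X * X => e.1.2)) keys -cardE.
Qed.

(* If some row u0 and some column i0 are monochromatic, they share the colour f (u0, i0),
   and every vertex of another colour lies on a split row and on a split column. *)
Lemma monochromatic_bulk (C : eqType) (f : X -> C) P :
  #|split_rows f P| < #|P| -> #|split_cols f P| < m ->
  exists2 u0, u0 \in P & (forall i j, f (u0, i) = f (u0, j)) /\
    (forall i, #|[set x : X | (x.1 \in P) && (f x != f (u0, i))]|
               <= #|split_rows f P| * #|split_cols f P|).
Proof.
move=> few_rows few_cols.
have [u0 u0P u0_mono] : exists2 u0, u0 \in P & u0 \notin split_rows f P.
  by apply/subsetPn; apply: contraL few_rows => /subset_leq_card; rewrite -leqNgt.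
have [i0 _ i0_mono] : exists2 i0, i0 \in [set: 'I_m] & i0 \notin split_cols f P.
  by apply/subsetPn; apply: contraL few_cols => /subset_leq_card; rewrite cardsT card_ord -leqNgt.
have row_const u : u \in P -> u \notin split_rows f P -> forall i j, f (u, i) = f (u, j).
  by move=> uP; rewrite inE uP => /existsPn mono i j; apply/eqP/negPn/(existsPn (mono i)).
have col_const i : i \notin split_cols f P -> {in P &, forall u w, f (u, i) = f (w, i)}.
  by rewrite inE => /exists_inPn mono u w uP wP; apply/eqP/negPn/(exists_inPn (mono u uP)).
exists u0 => //; split=> [|i]; first exact: row_const.
rewrite -cardsX; apply/subset_leq_card/subsetP => -[u j].
rewrite in_setX [in X in X -> _]inE /= => /andP [uP fuj].
rewrite (row_const u0 u0P u0_mono i i0) in fuj.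
apply/andP; split; apply: contraR fuj => mono.
  by rewrite (row_const u uP mono j i0) (col_const i0 i0_mono u u0).
by rewrite (col_const j mono u u0) // (row_const u0 u0P u0_mono j i0).
Qed.

Lemma uniq_of_ends s : uniq (ends s) -> uniq s.
Proof.
elim: s => //= e s IHs; rewrite -/(ends s) => /and3P [_ e2 /IHs ->]; rewrite andbT.
by apply: contra e2 => es; apply/mem_endsP; exists e; rewrite ?eqxx ?orbT.
Qed.

Lemma disjoint_ends s e e' : uniq (ends s) -> e \in s -> e' \in s -> e != e' ->
  [disjoint [set e.1; e.2] & [set e'.1; e'.2]].
Proof.
elim: s => //= a s IHs; rewrite -/(ends s) => /and3P [a1 a2 uniq_s].
have fresh x : x \in s -> [disjoint [set a.1; a.2] & [set x.1; x.2]].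
  move=> xs; have [x1 x2] : x.1 \in ends s /\ x.2 \in ends s.
    by split; apply/mem_endsP; exists x; rewrite ?eqxx ?orbT.
  apply/pred0P => y /=; rewrite !inE; apply/negbTE/negP.
  by case/andP => /orP [] /eqP -> /orP [] /eqP E; move: a1 a2; rewrite inE E ?x1 ?x2 ?orbT.
rewrite !inE => /orP [/eqP ->|es] /orP [/eqP ->|e's] neq; first by rewrite eqxx in neq.
- exact: fresh.
- by rewrite disjoint_sym; exact: fresh.
- exact: IHs.
Qed.

Lemma bichromatic_matchingS (C : eqType) (f : X -> C) (P Q : {set T}) s :
  P \subset Q -> bichromatic_matching f P s -> bichromatic_matching f Q s.
Proof.
move=> /subsetP PQ /and3P [edges uniq_s /allP in_P]; rewrite /bichromatic_matching edges uniq_s.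
by apply/allP => x /in_P /PQ.
Qed.

Lemma bichromatic_matching_set (C : eqType) (f : X -> C) P s :
  bichromatic_matching f P s ->
  exists M : {set {set X}}, [/\ is_matching (prodTH eT eH) M, #|M| = size s &
    forall x y, [set x; y] \in M -> x != y -> f x != f y].
Proof.
move=> /and3P [/allP edges uniq_ends _].
have neq_ends e : e \in s -> e.1 != e.2.
  by move=> /edges /andP [_]; apply: contra => /eqP ->.
have disj := disjoint_ends uniq_ends.
exists [set [set e.1; e.2] | e in s]; split.
- split=> [A /imsetP [e es ->]|A B /imsetP [e es ->] /imsetP [e' e's ->] neq].
    by exists e.1, e.2; have /andP [edge _] := edges e es; rewrite neq_ends.
  by apply: disj es e's _; apply: contra neq => /eqP ->.
- rewrite card_in_imset ?(card_uniqP (uniq_of_ends uniq_ends)) // => e e' es e's eq_ee'.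
  apply/eqP; apply: contraT => neq; have := disj _ _ es e's neq.
  by rewrite eq_ee' => /disjointFr/(_ (set21 e'.1 e'.2)); rewrite set21.
- move=> x y /imsetP [e es eq_xy] xy; have /andP [_ fe] := edges e es.
  have [x_e y_e] : x \in [set e.1; e.2] /\ y \in [set e.1; e.2].
    by rewrite -eq_xy !inE !eqxx ?orbT.
  move: x_e y_e xy; rewrite !inE => /orP [] /eqP -> /orP [] /eqP ->; rewrite ?eqxx //.
  by move=> _; rewrite eq_sym.
Qed.

Section Cuts.
Variables (V : {set X}) (SV : seq X) (p : nat).
Hypothesis SV_uniq : uniq SV.
Hypothesis mem_SV : forall x, (x \in SV) = (x \in V).
Hypothesis rows_meet_V : forall u, exists i, (u, i) \in V.
Hypothesis p_le_m : 2 * p <= m.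

Definition side k x := if x \in take k SV then 0 else if x \in drop k SV then 1 else 2.

Lemma mem_V_take_drop k x : (x \in V) = (x \in take k SV) || (x \in drop k SV).
Proof. by rewrite -mem_SV -{1}(cat_take_drop k SV) mem_cat. Qed.

Lemma side_supports k x y : side k x != side k y -> supports_edge V SV k x y.
Proof.
rewrite /supports_edge !(mem_V_take_drop k) /side.
by case: (x \in take k SV); case: (x \in drop k SV);
   case: (y \in take k SV); case: (y \in drop k SV).
Qed.

Lemma side_V k x : x \in V -> side k x <= 1.
Proof. by rewrite (mem_V_take_drop k) /side; case: (x \in take k SV); case: (x \in drop k SV). Qed.

Lemma side_ne0 k x : (side k x != 0) = (x \notin take k SV).
Proof. by rewrite /side; case: (x \in take k SV); case: (x \in drop k SV). Qed.

Lemma side_ne1 k x : (side k x != 1) = (x \notin drop k SV).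
Proof.
rewrite /side; have [x_pre|] := boolP (x \in take k SV); last by case: (x \in drop k SV).
have /hasPn disj : ~~ has (mem (take k SV)) (drop k SV).
  by move: SV_uniq; rewrite -{1}(cat_take_drop k SV) cat_uniq => /and3P [].
by apply/esym/negP => x_suf; exact: (negP (disj x x_suf)).
Qed.

Definition off_side (P : {set T}) k c := [set x : X | (x.1 \in P) && (side k x != c)].

Definition balanced (P : {set T}) k :=
  (p ^ 2 <= #|off_side P k 0|) && (p ^ 2 <= #|off_side P k 1|).

Lemma off_prefixS (P Q : {set T}) k l :
  P \subset Q -> l <= k -> off_side P k 0 \subset off_side Q l 0.
Proof.
move=> /subsetP PQ lk; apply/subsetP => x; rewrite !inE !side_ne0 => /andP [/PQ -> /=].
by apply: contra; rewrite -(take_takel SV lk); exact: mem_take.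
Qed.

Lemma off_suffixS (P Q : {set T}) k l :
  P \subset Q -> k <= l -> off_side P k 1 \subset off_side Q l 1.
Proof.
move=> /subsetP PQ kl; apply/subsetP => x; rewrite !inE !side_ne1 => /andP [/PQ -> /=].
by apply: contra; rewrite -(subnK kl) -drop_drop; exact: mem_drop.
Qed.

Lemma balancedS (P Q : {set T}) k : P \subset Q -> balanced P k -> balanced Q k.
Proof.
move=> PQ /andP [bal0 bal1]; apply/andP; split.
  exact/(leq_trans bal0)/subset_leq_card/off_prefixS.
exact/(leq_trans bal1)/subset_leq_card/off_suffixS.
Qed.

Lemma card_block (P : {set T}) : #|[set x : X | x.1 \in P]| = #|P| * m.
Proof.
have -> : [set x : X | x.1 \in P] = setX P [set: 'I_m] by apply/setP => -[u i]; rewrite !inE andbT.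
by rewrite cardsX cardsT card_ord.
Qed.

Lemma card_off_suffixS (P : {set T}) k : #|off_side P k.+1 1| <= #|off_side P k 1|.+1.
Proof.
have sub : off_side P k.+1 1 \subset off_side P k 1 :|: [set x in take 1 (drop k SV)].
  apply/subsetP => x; rewrite !inE !side_ne1 -add1n -drop_drop => /andP [-> /=].
  set d := drop k SV; rewrite -{2}(cat_take_drop 1 d) mem_cat negb_or.
  by case: (x \in take 1 d); rewrite ?orbT ?orbF.
apply: leq_trans (subset_leq_card sub) _; apply: leq_trans (leq_card_setU _ _) _.
suff : #|[set x in take 1 (drop k SV)]| <= 1 by lia.
by rewrite cardsE (leq_trans (card_size _)) // size_take_min geq_minl.
Qed.

Lemma balanced_exists (P : {set T}) : p <= #|P| -> exists k, balanced P k.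
Proof.
move=> pP; have big_block : 2 * p ^ 2 <= #|P| * m by have := leq_mul pP p_le_m; lia.
have off_all k c : (forall x, side k x != c) -> #|off_side P k c| = #|P| * m.
  by move=> neq; rewrite -card_block; apply: eq_card => x; rewrite !inE neq andbT.
have off_sum k : #|P| * m <= #|off_side P k 0| + #|off_side P k 1|.
  rewrite -card_block; apply: leq_trans (leq_card_setU _ _); apply/subset_leq_card/subsetP.
  by move=> x; rewrite !inE => ->; case: (side k x) => [|[]].
have ex_suffix : exists k, p ^ 2 <= #|off_side P k 1|.
  by exists (size SV); rewrite off_all => [|x]; [lia | rewrite side_ne1 drop_size].
case: (ex_minnP ex_suffix) => -[|k] suffix_k min_k.
  by exists 0; rewrite /balanced suffix_k off_all => [|x]; [lia | rewrite side_ne0 take0].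
exists k.+1; rewrite /balanced suffix_k andbT.
have : #|off_side P k 1| < p ^ 2 by rewrite ltnNge; apply/negP => /min_k; rewrite ltnn.
have := card_off_suffixS P k; have := off_sum k.+1; lia.
Qed.

Lemma balanced_block_matching (P : {set T}) rho k : parent_closed P rho -> p <= #|P| ->
  balanced P k -> exists2 s, bichromatic_matching (side k) P s & p <= size s.
Proof.
move=> closed pP /andP [bal0 bal1].
have [p_rows|few_rows] := leqP p #|split_rows (side k) P|.
  by have [s Ms size_s] := row_matching (side k) P; exists s; rewrite ?size_s.
have [p_cols|few_cols] := leqP p #|split_cols (side k) P|.
  by have [s Ms size_s] := col_matching (side k) closed; exists s; rewrite ?size_s.
have [|u0 u0P [_ bulk]] := monochromatic_bulk (leq_trans few_rows pP).
  by apply: leq_trans few_cols _; lia.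
have [i0 u0V] := rows_meet_V u0.
have small : #|[set x : X | (x.1 \in P) && (side k x != side k (u0, i0))]| < p ^ 2.
  by apply: leq_ltn_trans (bulk i0) _; rewrite expnS expn1 ltn_mul.
move: (side_V k u0V) small; case: (side k (u0, i0)) => [|[|]] //= _.
  by rewrite ltnNge bal0.
by rewrite ltnNge bal1.
Qed.

Lemma balanced_setT k : balanced [set: T] k ->
  p ^ 2 <= #|{: X}| - size (take k SV) /\ p ^ 2 <= #|{: X}| - size (drop k SV).
Proof.
have card_off (l : seq X) c : uniq l -> (forall x, (side k x != c) = (x \notin l)) ->
    #|off_side [set: T] k c| = #|{: X}| - size l.
  move=> uniq_l side_l; rewrite -(card_uniqP uniq_l) -(cardC (mem l)) addKn.
  by apply: eq_card => x; rewrite !inE side_l.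
move=> /andP [bal0 bal1].
rewrite -(card_off _ _ (take_uniq k SV_uniq) (side_ne0 k)).
by rewrite -(card_off _ _ (drop_uniq k SV_uniq) (side_ne1 k)).
Qed.

Definition balanced_cut_matching v n := exists k s,
  [/\ balanced (subtree v) k, bichromatic_matching (side k) (subtree v) s & n <= size s].

Lemma balanced_cut_matchingW v n1 n2 : n1 <= n2 ->
  balanced_cut_matching v n2 -> balanced_cut_matching v n1.
Proof.
by move=> le12 [k [s [bal Ms size_s]]]; exists k, s; split=> //; apply: leq_trans size_s.
Qed.

Lemma balanced_cut_matching_small v : p <= #|subtree v| -> balanced_cut_matching v p.
Proof.
move=> pv; have [k bal] := balanced_exists pv.
have [s Ms size_s] := balanced_block_matching (parent_closed_subtree v) pv bal.
by exists k, s.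
Qed.

(* The rest of the subtree of v outside the median child j inherits the balance of the cut kj:
   it contains the child with the larger cut, which leaves p^2 vertices off the prefix, and
   the child with the smaller cut, which leaves p^2 vertices off the suffix. *)
Lemma median_child_step v a j b ka kj kb s :
  a \in children v -> j \in children v -> b \in children v ->
  a != j -> b != j -> ka <= kj <= kb ->
  balanced (subtree a) ka -> balanced (subtree j) kj -> balanced (subtree b) kb ->
  p <= #|subtree a| -> bichromatic_matching (side kj) (subtree j) s ->
  balanced_cut_matching v (size s + p).
Proof.
move=> av jv bv aj bj /andP [le_aj le_jb] /andP [_ bal_a] bal_j /andP [bal_b _] pa Ms.
set R := subtree v :\: subtree j.
have sub_R x : x \in children v -> x != j -> subtree x \subset R.
  move=> xv xj; apply/subsetP => u ux; rewrite in_setD (subsetP (subtree_child xv) _ ux) andbT.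
  by rewrite (disjointFr (disjoint_subtree_children xv jv xj) ux).
have bal_R : balanced R kj.
  apply/andP; split.
    exact/(leq_trans bal_b)/subset_leq_card/off_prefixS/le_jb/sub_R.
  exact/(leq_trans bal_a)/subset_leq_card/off_suffixS/le_aj/sub_R.
have [s' Ms' size_s'] := balanced_block_matching (parent_closed_subtreeD jv)
  (leq_trans pa (subset_leq_card (sub_R a av aj))) bal_R.
exists kj, (s ++ s'); split; first exact: balancedS (subtree_child jv) bal_j.
  apply: bichromatic_matchingS (bichromatic_matching_cat _ Ms Ms').
    by apply/subUsetP; split; [exact: subtree_child | exact: subsetDl].
  by apply/pred0P => u /=; rewrite in_setD; case: (u \in subtree j).
by rewrite size_cat leq_add2l.
Qed.

Lemma three_children_step v n : ~~ is_leaf r par v ->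
  (forall c, c \in children v -> p <= #|subtree c| /\ balanced_cut_matching c n) ->
  balanced_cut_matching v (n + p).
Proof.
move=> nonleaf IH.
pose cut_ok c (ks : nat * seq (X * X)) := c \in children v ->
  [/\ balanced (subtree c) ks.1, bichromatic_matching (side ks.1) (subtree c) ks.2
    & n <= size ks.2].
have [cut cutP] : exists cut, forall c, cut_ok c (cut c).
  apply: fin_all_exists => c; have [cv|ncv] := boolP (c \in children v).
    by have [_ [k [s ok]]] := IH c cv; exists (k, s).
  by exists (0, [::]); rewrite /cut_ok (negbTE ncv).
have [a [b [c [uniq_abc Cv _]]]] := subtree_nonleaf nonleaf.
have [x [y [z [perm_xyz le_xyz]]]] := median_of_three (fun w => (cut w).1) a b c.
have mem_xyz w : (w \in children v) = (w \in [:: x; y; z]).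
  by rewrite (perm_mem perm_xyz) Cv !inE orbA.
have [xy zy] : x != y /\ z != y.
  move: uniq_abc; rewrite -(perm_uniq perm_xyz) /= !inE !negb_or andbT.
  by case/andP => /andP [-> _] yz; rewrite eq_sym.
have [xv yv zv] : [/\ x \in children v, y \in children v & z \in children v].
  by rewrite !mem_xyz !inE !eqxx ?orbT.
have [bal_x _ _] := cutP x xv; have [bal_y My ny] := cutP y yv; have [bal_z _ _] := cutP z zv.
have [px _] := IH x xv.
apply: balanced_cut_matchingW (median_child_step xv yv zv xy zy le_xyz bal_x bal_y bal_z px My).
by rewrite leq_add2r.
Qed.

Lemma balanced_cut_matching_depth v d : depth_is r par v d -> p <= #|subtree v| ->
  balanced_cut_matching v (p * (h - d - tr p)).
Proof.
elim/subtree_ind: v d => v IH d v_d pv.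
have [big|small] := boolP (~~ is_leaf r par v && (p <= ctt_size (h - d.+1))).
  case/andP: big => nonleaf big.
  have step := three_children_step (n := p * (h - d.+1 - tr p)) nonleaf.
  apply: balanced_cut_matchingW (step _) => [|c cv].
    by rewrite -mulnSr leq_mul2l; apply/orP; right; lia.
  have c_d := depth_is_child cv v_d; have [_ size_c] := card_subtree_depth c_d.
  by rewrite size_c; split=> //; apply: (IH c cv _ c_d); rewrite size_c.
apply: balanced_cut_matchingW (balanced_cut_matching_small pv).
rewrite -[X in _ <= X]muln1 leq_mul2l; apply/orP; right.
case/nandP: small => [/negPn/leaf_depth/(depth_is_uniq v_d) ->|]; first by rewrite subnn.
by rewrite -ltnNge => /ltnW/leq_tr; lia.
Qed.

Lemma tree_cut_matching : p <= #|T| -> exists (M : {set {set X}}) (k : nat),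
  [/\ is_matching (prodTH eT eH) M, supports_matching V SV k M,
      p * (tr #|T| - tr p) <= #|M|,
      p ^ 2 <= #|{: X}| - size (take k SV)
    & p ^ 2 <= #|{: X}| - size (drop k SV)].
Proof.
move=> pT; have root_0 : depth_is r par r 0 by [].
have [_] := card_subtree_depth root_0; rewrite subtree_root cardsT subn0 => size_T.
have [|k [s [bal Ms size_s]]] := balanced_cut_matching_depth root_0.
  by rewrite subtree_root cardsT.
have [M [matching_M card_M bic_M]] := bichromatic_matching_set Ms.
rewrite subtree_root in bal; have [bal_pre bal_suf] := balanced_setT bal.
exists M, k; split=> //.
  by move=> x y xyM xy; apply/side_supports/bic_M.
rewrite card_M; apply: leq_trans size_s; rewrite leq_mul2l subn0 size_T leq_sub2r ?orbT //.
exact: tr_ctt_size.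
Qed.

End Cuts.
End Grid.
End CompleteTernary.
End RootedTree.

Theorem lemma3 (p : nat) (m : nat) (eH : rel 'I_m) (T : finType) (eT : rel T)
    (h : nat) (V : {set T * 'I_m}) (SV : seq (T * 'I_m)) :
  1 <= p ->
  connected_graph eH -> 2 * p <= m ->
  complete_ternary_tree eT h -> p <= #|T| ->
  OC V = [set: T] ->
  ordering_of V SV ->
  exists (M : {set {set T * 'I_m}}) (k : nat),
    [/\ is_matching (prodTH eT eH) M,
        supports_matching V SV k M,
        p * (tr #|T| - tr p) <= #|M|,
        p ^ 2 <= #|{: T * 'I_m}| - size (take k SV)
      & p ^ 2 <= #|{: T * 'I_m}| - size (drop k SV)].
Proof.
move=> _ [_ eH_connected] p_le_m [r [par [[par_r [reach_r eT_def]] [leaf_depth children3]]]].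
move=> pT OC_V [SV_uniq mem_SV].
have eT_par u : u != r -> eT u (par u) by move=> ur; rewrite eT_def ur eqxx.
have rows_meet_V u : exists i, (u, i) \in V.
  by apply/existsP; have := in_setT u; rewrite -OC_V inE.
exact: (tree_cut_matching par_r reach_r leaf_depth children3 eT_par eH_connected
          SV_uniq mem_SV rows_meet_V p_le_m pT).
Qed.
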